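(* Every proper list system admits a fair distribution.
   Context: Let $\mathbb{N}_k := \{0,1,\ldots,k-1\}$. A list system is a triple $(S,T,\mathcal{L})$, where $S$ is a set of $n_1 := |S|$ source nodes, $T$ is a set of $n_2 := |T|$ target nodes, and $\mathcal{L}: S\times \mathbb{N}_{\Delta_1} \to S$ assigns to every source node $s\in S$ a list $L_s$ of $\Delta_1 \le n_2$ not necessarily distinct elements of $S$. For $s,s'\in S$, $l(s,s')$ denotes how many times $s'$ appears in the list $L_s$. A list system is called proper when $n_2$ divides $n_1\Delta_1$ and $\sum_{s\in S} l(s,s') = \Delta_1$ for every $s'\in S$. Let $\Delta_2 := \frac{n_1\Delta_1}{n_2}$. A fair distribution is an assignment $f: S\times\mathbb{N}_{\Delta_1}\to T$ such that: (1) $|\{f(s,i) : i\in\mathbb{N}_{\Delta_1}\}| = \Delta_1$ for every $s\in S$; (2) $|\{(s,i)\in S\times\mathbb{N}_{\Delta_1} : f(s,i)=t\}| = \Delta_2$ for every $t\in T$; (3) if $(s_1,i_1)\neq(s_2,i_2)$ and $\mathcal{L}(s_1,i_1)=\mathcal{L}(s_2,i_2)$, then $f(s_1,i_1)\neq f(s_2,i_2)$, for all $s_1,s_2\in S$ and $i_1,i_2\in\mathbb{N}_{\Delta_1}$. *)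

From mathcomp Require Import all_boot.
Set Implicit Arguments. Unset Strict Implicit. Unset Printing Implicit Defensive.

(* A list system (S, T, L): S, T finite sets of source / target nodes,
   L : S x N_{d1} -> S assigns to each source s the list L_s = (L s i)_{i < d1}. *)

Definition lmult (S : finType) (d1 : nat) (L : S -> 'I_d1 -> S) (s s' : S) : nat :=
  #|[set i : 'I_d1 | L s i == s']|.

Definition list_system (S T : finType) (d1 : nat) (L : S -> 'I_d1 -> S) : Prop :=
  d1 <= #|T|.

Definition proper_list_system (S T : finType) (d1 : nat) (L : S -> 'I_d1 -> S) : Prop :=
  list_system T L /\
  (#|T| %| #|S| * d1) /\
  (forall s' : S, \sum_(s : S) lmult L s s' = d1).

Definition delta2 (S T : finType) (d1 : nat) : nat := (#|S| * d1) %/ #|T|.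

Definition fair_distribution (S T : finType) (d1 : nat) (L : S -> 'I_d1 -> S)
  (f : S -> 'I_d1 -> T) : Prop :=
  (* (1) *) (forall s : S, #|[set f s i | i : 'I_d1]| = d1) /\
  (* (2) *) (forall t : T, #|[set p : S * 'I_d1 | f p.1 p.2 == t]| = delta2 S T d1) /\
  (* (3) *) (forall (s1 s2 : S) (i1 i2 : 'I_d1),
               (s1, i1) <> (s2, i2) -> L s1 i1 = L s2 i2 -> f s1 i1 <> f s2 i2).

(* Let a = |S| - Delta_2 and m = |T| - Delta_1.  Both sides of an auxiliary bipartite
   multigraph are S + A with |A| = a: each list entry (s, i) is an edge from s to L s i,
   and a map h : S * N_m -> A with fibres of size |T| (it exists since |S| m = a |T|)
   gives every s m padding edges to A and m padding edges back from A.  Properness of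
   the list system makes this graph |T|-regular, so by Koenig's theorem (perfect
   matchings from Hall's theorem, peeled off one at a time) its edges are properly
   coloured by T; f(s, i) is the colour of the entry (s, i).  Properness at the left
   end s gives (1), at the right end L s i gives (3).  In one colour class the a right
   copies of A are hit by padding edges leaving a left vertices of S, so the other
   |S| - a = Delta_2 left vertices of S are covered by list entries: this is (2). *)

From mathcomp Require Import all_boot zify.
Set Implicit Arguments. Unset Strict Implicit. Unset Printing Implicit Defensive.

Lemma card_preim_fibers (A B : finType) (P : pred A) (g : A -> B) (Y : {set B}) :
  #|[set x | P x && (g x \in Y)]| = \sum_(y in Y) #|[set x | P x && (g x == y)]|.
Proof.
rewrite -sum1dep_card (partition_big g (mem Y)) /=; last by move=> x /andP[].
apply: eq_bigr => y yY; rewrite -sum1dep_card; apply: eq_bigl => x.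
by case: eqP => [->|]; rewrite ?yY ?andbT ?andbF.
Qed.

Lemma sum_card_fibers (A B : finType) (P : pred A) (g : A -> B) :
  \sum_b #|[set x | P x && (g x == b)]| = #|[set x | P x]|.
Proof.
have -> : #|[set x | P x]| = #|[set x | P x && (g x \in [set: B])]|.
  by apply: eq_card => x; rewrite !inE andbT.
by rewrite card_preim_fibers; apply: eq_bigl => b; rewrite in_setT.
Qed.

Lemma card_set_sum (A B : finType) (P : pred (A + B)) :
  #|[set e | P e]| = #|[set x | P (inl x)]| + #|[set y | P (inr y)]|.
Proof. by rewrite -!sum1dep_card big_sumType. Qed.

Lemma card_set_pair (A B : finType) (P : A -> B -> bool) :
  #|[set p : A * B | P p.1 p.2]| = \sum_a #|[set b | P a b]|.
Proof.
by rewrite -sum1dep_card; under [RHS]eq_bigr do rewrite -sum1dep_card; rewrite pair_big_dep.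
Qed.

Lemma card_fst_fiber (A B : finType) (a : A) : #|[set p : A * B | p.1 == a]| = #|B|.
Proof.
rewrite -[#|B|]mul1n -(cards1 a) -cardsT -cardsX; apply: eq_card => p.
by rewrite !inE andbT.
Qed.

Lemma card_set_andF (A : finType) (P : pred A) : #|[set x | P x && false]| = 0.
Proof. by under eq_finset => x do rewrite andbF; rewrite cards0. Qed.

Section Hall.
Variables TX TY : finType.
Implicit Types (R : TX -> TY -> bool) (A B X : {set TX}) (Y : {set TY}).

Definition nbh R A : {set TY} := [set y | [exists x in A, R x y]].

Definition hall_condition R X := forall A, A \subset X -> #|A| <= #|nbh R A|.

Definition matchable R X :=
  exists f : TX -> TY, {in X &, injective f} /\ {in X, forall x, R x (f x)}.

Lemma mem_nbh R A x y : x \in A -> R x y -> y \in nbh R A.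
Proof. by move=> xA Rxy; rewrite inE; apply/existsP; exists x; rewrite xA. Qed.

Lemma hall_condition_sub R A X : A \subset X -> hall_condition R X -> hall_condition R A.
Proof. by move=> sAX hX B sBA; apply/hX/(subset_trans sBA). Qed.

Lemma matchable_glue R A X Y :
  matchable (fun x y => R x y && (y \in Y)) A ->
  matchable (fun x y => R x y && (y \notin Y)) (X :\: A) -> matchable R X.
Proof.
move=> [f1 [inj1 R1]] [f2 [inj2 R2]].
have inD z : z \in X -> z \notin A -> z \in X :\: A by move=> zX zA; rewrite inE zA.
exists (fun x => if x \in A then f1 x else f2 x); split; last first.
  move=> x xX; case: ifPn => xA; first by case/andP: (R1 x xA).
  by case/andP: (R2 x (inD _ xX xA)).
move=> x x' xX x'X /=; case: ifPn => xA; case: ifPn => x'A.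
- exact: inj1.
- move=> e; have /andP[_ /negP[]] := R2 x' (inD _ x'X x'A).
  by rewrite -e; case/andP: (R1 x xA).
- move=> e; have /andP[_ /negP[]] := R2 x (inD _ xX xA).
  by rewrite e; case/andP: (R1 x' x'A).
- by apply: inj2; apply: inD.
Qed.

Section HallStep.
Variables (R : TX -> TY -> bool) (X : {set TX}).
Hypothesis hallX : hall_condition R X.
Hypothesis IH : forall R' (X' : {set TX}),
  #|X'| < #|X| -> hall_condition R' X' -> matchable R' X'.

Lemma matchable_tight A : A \proper X -> A != set0 -> #|nbh R A| <= #|A| -> matchable R X.
Proof.
move=> ltAX nzA tightA; have sAX := proper_sub ltAX.
apply: (@matchable_glue R A X (nbh R A)).
  have [f [injf Rf]] := IH (proper_card ltAX) (hall_condition_sub sAX hallX).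
  by exists f; split=> // x xA; rewrite Rf //; apply: mem_nbh (Rf x xA).
apply: IH => [|B sBXA].
  rewrite cardsDS // -card_gt0 in nzA *.
  by have := subset_leq_card sAX; have := proper_card ltAX; lia.
have sBX : B \subset X := subset_trans sBXA (subsetDl _ _).
have disjAB : [disjoint A & B].
  rewrite -setI_eq0 -subset0; apply/subsetP => x; rewrite !inE => /andP[xA].
  by move/(subsetP sBXA); rewrite inE xA.
have sNAB : nbh R (A :|: B) \subset
              nbh R A :|: nbh (fun x y => R x y && (y \notin nbh R A)) B.
  apply/subsetP => y; rewrite inE => /existsP[x /andP[]]; rewrite inE => /orP[xA|xB] Rxy.
    by rewrite inE (mem_nbh xA Rxy).
  rewrite inE orbC; case: (boolP (y \in nbh R A)) => [_|nA]; rewrite ?orbT // orbF.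
  by apply: (mem_nbh xB); rewrite Rxy.
have : #|A :|: B| <= #|nbh R (A :|: B)| by apply: hallX; rewrite subUset sAX sBX.
have := subset_leq_card sNAB; rewrite !cardsU (disjoint_setI0 disjAB) cards0; lia.
Qed.

Lemma matchable_loose x0 : x0 \in X ->
    (forall A, A \proper X -> A != set0 -> #|A| < #|nbh R A|) -> matchable R X.
Proof.
move=> x0X loose.
have : 0 < #|nbh R [set x0]| by rewrite -(cards1 x0) hallX // sub1set.
case/card_gt0P => y1; rewrite inE => /existsP[_ /andP[/set1P -> Rx0y1]].
apply: (@matchable_glue R [set x0] X [set y1]).
  exists (fun=> y1); split=> [x x' /set1P -> /set1P -> //| x /set1P ->].
  by rewrite Rx0y1 set11.
apply: IH => [|B sBX0].
  by rewrite (cardsD1 x0 X) x0X.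
have [-> | nzB] := eqVneq B set0; first by rewrite cards0.
have ltBX : B \proper X.
  apply/properP; split; first exact: subset_trans sBX0 (subsetDl _ _).
  by exists x0 => //; apply/negP => /(subsetP sBX0); rewrite !inE eqxx.
have sN : nbh R B \subset y1 |: nbh (fun x y => R x y && (y \notin [set y1])) B.
  apply/subsetP => y; rewrite inE => /existsP[x /andP[xB Rxy]]; rewrite !inE.
  by case: eqP => //= _; apply/existsP; exists x; rewrite xB Rxy.
have := loose B ltBX nzB; have := subset_leq_card sN; rewrite cardsU1; lia.
Qed.

End HallStep.

Theorem hall_marriage (y0 : TY) R X : hall_condition R X -> matchable R X.
Proof.
have [n] := ubnP #|X|; elim: n R X => // n IHn R X /ltnSE leXn hallX.
have IH R' (X' : {set TX}) : #|X'| < #|X| -> hall_condition R' X' -> matchable R' X'.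
  by move=> ltX'; apply: IHn; apply: leq_trans ltX' leXn.
have [X0 | [x0 x0X]] := set_0Vmem X.
  by exists (fun=> y0); split=> x; rewrite X0 inE.
case: (boolP [exists A : {set TX}, [&& A \proper X, A != set0 & #|nbh R A| <= #|A|]]).
  by case/existsP => A /and3P[ltAX nzA tightA]; apply: (matchable_tight hallX IH ltAX).
rewrite negb_exists => /forallP loose; apply: (matchable_loose hallX IH x0X) => A ltAX nzA.
by have := loose A; rewrite ltAX nzA /= -ltnNge.
Qed.

End Hall.

Section Bipartite.
Variables (V E : finType) (l r : E -> V).
Implicit Types (F M : {set E}) (p : E -> V).

Definition deg p F v := #|[set e in F | p e == v]|.

Definition regular k F := (forall v, deg l F v = k) /\ (forall v, deg r F v = k).

Lemma deg_setD p F M v : M \subset F -> deg p (F :\: M) v = deg p F v - deg p M v.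
Proof.
move=> sMF; rewrite /deg -cardsDS; last first.
  by apply/subsetP => e; rewrite !inE => /andP[/(subsetP sMF) ->].
by apply: eq_card => e; rewrite !inE; case: (e \in M) (e \in F) (p e == v) => [] [] [].
Qed.

Lemma deg1_injective p M : (forall v, deg p M v = 1) -> {in M &, injective p}.
Proof.
move=> degM e e' eM e'M pe; have /card_le1_eqP := eq_leq (degM (p e)).
by apply; rewrite inE ?eM ?e'M pe eqxx.
Qed.

Lemma regular1_imset (g : V -> E) :
  cancel g l -> injective (r \o g) -> regular 1 [set g x | x : V].
Proof.
move=> gK injrg; split=> v; apply/eqP/cards1P.
  exists (g v); apply/setP => e; rewrite !inE; apply/andP/eqP => [[/imsetP[x _ ->]]|->].
    by rewrite gK => /eqP ->.
  by rewrite imset_f // gK.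
have [x <-] : exists x, r (g x) = v.
  by have [h _ hK] := injF_bij injrg; exists (h v); rewrite -[r _]/((r \o g) (h v)) hK.
exists (g x); apply/setP => e; rewrite !inE; apply/andP/eqP => [[/imsetP[x' _ ->]]|->].
  by move=> /eqP /injrg ->.
by rewrite imset_f.
Qed.

Lemma regular_perfect_matching k F :
  regular k.+1 F -> exists2 M : {set E}, M \subset F & regular 1 M.
Proof.
move=> [degl degr]; case: (pickP (@predT V)) => [y0 _|V0]; last first.
  by exists set0; [exact: sub0set | split=> v; have := V0 v].
pose R x y := [exists e in F, (l e == x) && (r e == y)].
have [f [injf Rf]] : matchable R [set: V].
  apply: (hall_marriage y0) => A _; rewrite -(@leq_pmul2l k.+1) //.
  have cardA (B : {set V}) p :
      (forall v, deg p F v = k.+1) -> #|[set e in F | p e \in B]| = k.+1 * #|B|.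
    move=> degp; rewrite card_preim_fibers (eq_bigr _ (fun v _ => degp v)).
    by rewrite sum_nat_const mulnC.
  rewrite -(cardA _ _ degl) -(cardA _ _ degr); apply/subset_leq_card/subsetP => e.
  rewrite !inE => /andP[eF leA]; rewrite eF; apply/existsP; exists (l e); rewrite leA.
  by apply/existsP; exists e; rewrite eF !eqxx.
have edge x : exists e, (e \in F) && (l e == x) && (r e == f x).
  by have /existsP[e /andP[eF /andP[le re]]] := Rf x (in_setT x); exists e; rewrite eF le re.
pose g x := xchoose (edge x).
have gP x : [/\ g x \in F, l (g x) = x & r (g x) = f x].
  by have /andP[/andP[? /eqP ?] /eqP ?] := xchooseP (edge x).
exists [set g x | x : V].
  by apply/subsetP => e /imsetP[x _ ->]; case: (gP x).
apply: regular1_imset => [x | x x' /=]; first by case: (gP x).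
by case: (gP x) (gP x') => _ _ -> [_ _ ->] /injf; apply; rewrite inE.
Qed.

Lemma colouring_extend p F M k (c : E -> 'I_k) :
    {in M &, injective p} -> {in F :\: M &, injective (fun e => (p e, c e))} ->
  {in F &, injective (fun e => (p e, if e \in M then ord_max else lift ord_max (c e)))}.
Proof.
move=> injM injc e e' eF e'F [pe]; case: ifPn => eM; case: ifPn => e'M.
- by move=> _; apply: injM.
- by move=> /eqP; rewrite (negPf (neq_lift _ _)).
- by move=> /eqP; rewrite eq_sym (negPf (neq_lift _ _)).
- by move=> /lift_inj ce; apply: injc; rewrite ?inE ?eM ?e'M ?pe ?ce.
Qed.

Theorem regular_edge_colouring_in k F : regular k.+1 F ->
  exists c : E -> 'I_k.+1,
    {in F &, injective (fun e => (l e, c e))} /\ {in F &, injective (fun e => (r e, c e))}.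
Proof.
elim: k F => [|k IHk] F regF.
  exists (fun=> ord0); case: regF => /deg1_injective injl /deg1_injective injr.
  by split=> e e' eF e'F [pe]; [exact: injl | exact: injr].
have [M sMF regM] := regular_perfect_matching regF.
have regFM : regular k.+1 (F :\: M).
  by split=> v; rewrite deg_setD // (regF.1 v, regF.2 v) (regM.1 v, regM.2 v) subn1.
have [c [injl injr]] := IHk _ regFM.
exists (fun e => if e \in M then ord_max else lift ord_max (c e)).
by split; apply: colouring_extend => //; apply: deg1_injective; case: regM.
Qed.

Lemma deg_colour_class p k F (c : E -> 'I_k) :
    (forall v, deg p F v = k) -> {in F &, injective (fun e => (p e, c e))} ->
  forall v j, deg p [set e in F | c e == j] v = 1.
Proof.
move=> degp injc v j; set star := [set e in F | p e == v].
have injstar : {in star &, injective c}.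
  move=> e e'; rewrite !inE => /andP[eF /eqP pe] /andP[e'F /eqP pe'] ce.
  by apply: injc; rewrite //= pe pe' ce.
have : j \in c @: star.
  suff /eqP -> : c @: star == [set: 'I_k] by rewrite in_setT.
  by rewrite eqEcard subsetT cardsT card_ord card_in_imset //= -(degp v).
case/imsetP => e; rewrite inE => /andP[eF /eqP pe] ->.
apply/eqP/cards1P; exists e; apply/setP => e'; rewrite !inE.
apply/idP/eqP => [/andP[/andP[e'F /eqP ce] /eqP pe']|->]; last by rewrite eF pe !eqxx.
by apply: injc; rewrite //= pe pe' ce.
Qed.

Corollary regular_edge_colouring k : regular k [set: E] ->
  exists c : E -> 'I_k, injective (fun e => (l e, c e)) /\ injective (fun e => (r e, c e)).
Proof.
case: k => [[degl _] | k /regular_edge_colouring_in[c [injl injr]]].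
  have noE (e : E) : False.
    by have := degl (l e); rewrite /deg (cardD1 e) !inE eqxx.
  by exists (fun e => match noE e with end); split=> e; case: (noE e).
by exists c; split=> e e'; [apply: injl | apply: injr]; rewrite in_setT.
Qed.

End Bipartite.

Lemma biregular_map (X Y : finType) dx dy : #|X| * dx = #|Y| * dy ->
  exists h : X * 'I_dx -> Y, forall y, #|[set p | h p == y]| = dy.
Proof.
move=> eqXY; have eqc : #|{: X * 'I_dx}| = #|{: Y * 'I_dy}| by rewrite !card_prod !card_ord.
pose phi p := enum_val (cast_ord eqc (enum_rank p)).
have bij_phi : bijective phi.
  exists (fun q => enum_val (cast_ord (esym eqc) (enum_rank q))) => q.
    by rewrite /phi enum_valK cast_ordK enum_rankK.
  by rewrite /phi enum_valK cast_ordKV enum_rankK.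
exists (fun p => (phi p).1) => y.
transitivity #|[set q : Y * 'I_dy | q.1 == y]|; last by rewrite card_fst_fiber card_ord.
rewrite -(on_card_preimset (onW_bij _ bij_phi)).
by apply: eq_card => p; rewrite !inE.
Qed.

Section ListSystemGraph.
Variables (S : finType) (d1 m a : nat) (L : S -> 'I_d1 -> S) (h : S * 'I_m -> 'I_a).

Definition lsg_vertex := (S + 'I_a)%type.
Definition lsg_edge := (S * 'I_d1 + (S * 'I_m + S * 'I_m))%type.

Definition lsg_src (e : lsg_edge) : lsg_vertex :=
  match e with inl p | inr (inl p) => inl p.1 | inr (inr p) => inr (h p) end.

Definition lsg_dst (e : lsg_edge) : lsg_vertex :=
  match e with inl p => inl (L p.1 p.2) | inr (inl p) => inr (h p) | inr (inr p) => inl p.1 end.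

Lemma lsg_regular :
    (forall s', \sum_s lmult L s s' = d1) -> (forall u, #|[set p | h p == u]| = d1 + m) ->
  regular lsg_src lsg_dst (d1 + m) [set: lsg_edge].
Proof.
move=> sumL fibh.
have degT p v : deg p [set: lsg_edge] v = #|[set e | p e == v]|.
  by apply: eq_card => e; rewrite !inE.
split=> -[s|u]; rewrite degT !card_set_sum -!sum_eqE /= !cards0;
  rewrite ?fibh ?card_fst_fiber ?card_ord ?addn0 //.
by rewrite (card_set_pair (fun x i => L x i == s)) sumL.
Qed.

Lemma lsg_colour_class (C : {set lsg_edge}) :
    (forall s, deg lsg_src C (inl s) = 1) -> (forall u, deg lsg_dst C (inr u) = 1) ->
  #|[set p | inl p \in C]| + a = #|S|.
Proof.
move=> degS degA.
have padA : #|[set p : S * 'I_m | inr (inl p) \in C]| = a.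
  rewrite -(sum_card_fibers _ h) (eq_bigr (fun=> 1)) => [|u _].
    by rewrite sum1_card card_ord.
  by rewrite -(degA u) /deg !card_set_sum -!sum_eqE /= !card_set_andF add0n addn0.
rewrite -padA -(sum_card_fibers _ fst) -[X in _ + X](sum_card_fibers _ fst).
rewrite -big_split -sum1_card; apply: eq_bigr => s _.
by rewrite -(degS s) /deg !card_set_sum -!sum_eqE /= card_set_andF addn0.
Qed.

End ListSystemGraph.

Theorem theorem1 (S T : finType) (d1 : nat) (L : S -> 'I_d1 -> S) :
  proper_list_system T L ->
  exists f : S -> 'I_d1 -> T, fair_distribution L f.
Proof.
case=> d1_le_T [T_dvd sumL]; set d2 := delta2 S T d1.
have d2T : d2 * #|T| = #|S| * d1 by rewrite divnK.
have d2_le_S : d2 <= #|S|.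
  have [T0 | T_gt0] := posnP #|T|; first by rewrite /d2 /delta2 T0 divn0.
  by rewrite -(leq_pmul2r T_gt0) d2T leq_mul2l d1_le_T orbT.
have [h fibh] : exists h : S * 'I_(#|T| - d1) -> 'I_(#|S| - d2),
    forall u, #|[set p | h p == u]| = #|T|.
  by apply: biregular_map; rewrite card_ord mulnBr mulnBl -d2T mulnC.
have regG : regular (lsg_src h) (lsg_dst L h) #|T| setT.
  have fibh' u : #|[set p | h p == u]| = d1 + (#|T| - d1) by rewrite fibh subnKC.
  by have := lsg_regular sumL fibh'; rewrite subnKC.
have [c [injl injr]] := regular_edge_colouring regG.
exists (fun s i => enum_val (c (inl (s, i)))); split; [|split].
- move=> s; rewrite card_imset ?card_ord // => i i' /enum_val_inj ci.
  by move: (injl (inl (s, i)) (inl (s, i'))); rewrite /= ci => /(_ erefl) [].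
- move=> t; set C := [set e in setT | c e == enum_rank t].
  have := lsg_colour_class (C := C) (fun s => deg_colour_class regG.1 (in2W injl) _ _)
                                   (fun u => deg_colour_class regG.2 (in2W injr) _ _).
  suff -> : #|[set p | enum_val (c (inl (p.1, p.2))) == t]| = #|[set p | inl p \in C]|.
    by rewrite -/d2 => eqS; apply/eqP; rewrite -(eqn_add2r (#|S| - d2)) eqS subnKC.
  apply: eq_card => p; rewrite !inE -surjective_pairing.
  by apply/eqP/eqP => [<-|->]; rewrite ?enum_valK ?enum_rankK.
- move=> s1 s2 i1 i2 neq eqL /enum_val_inj ceq; apply: neq.
  move: (injr (inl (s1, i1)) (inl (s2, i2))).
  by rewrite /= eqL ceq => /(_ erefl) [-> ->].
Qed.
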